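(* Let $\mathcal{T}$ be a fully sparse tournament with ordering $\sigma$ and backward arcs $e_1,\dots,e_b$. Let $G'$ be the digraph with vertex set $\{e_1,\dots,e_b\}$ having an arc $e_ie_j$ ($i\ne j$) whenever $(h(e_i),h(e_j),t(e_i))$ or $(h(e_i),t(e_j),t(e_i))$ is a triangle of $\mathcal{T}$ (equivalently, whenever $h(e_j)$ or $t(e_j)$ lies strictly between $h(e_i)$ and $t(e_i)$ in $\sigma$). Then the maximum number of pairwise arc-disjoint triangles of $\mathcal{T}$ equals the maximum size of an arc set $X\subseteq A(G')$ such that every vertex of $G'$ has out-degree at most $1$ in $X$ and $X$ contains no digon (no pair of arcs $xy,yx$). Moreover, for such a set $X$, the triangles $\Pi(e_ie_j)$, $e_ie_j\in X$, are pairwise arc-disjoint, where $\Pi(e_ie_j)$ is the triangle formed by $e_i$ and the endpoint of $e_j$ lying strictly between $h(e_i)$ and $t(e_i)$; and $X$ is optimal if and only if $\{\Pi(x):x\in X\}$ is a maximum triangle packing of $\mathcal{T}$.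
   Context: A tournament is an orientation of a complete graph; a triangle is a directed cycle of length 3. For an arc $a=uv$, $h(a)=v$ is its head and $t(a)=u$ its tail. Given a linear ordering $\sigma$ of the vertices, an arc $uv$ is backward if $v$ comes before $u$ in $\sigma$. $\mathcal{T}$ is fully sparse (with respect to $\sigma$) if the backward arcs form a matching, no backward arc joins two consecutive vertices of $\sigma$, and every vertex is the head or the tail of some backward arc. *)

From mathcomp Require Import all_boot.
Set Implicit Arguments. Unset Strict Implicit. Unset Printing Implicit Defensive.

Section Defs.
Variables (T : finType) (arc : rel T) (sigma : T -> nat).

Definition tournament : Prop :=
  (forall u, ~~ arc u u) /\
  (forall u v, u != v -> (arc u v || arc v u) && ~~ (arc u v && arc v u)).

(* sigma is a linear ordering of the vertices, given by injective ranks *)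
Definition between (a x b : T) : bool := (sigma a < sigma x) && (sigma x < sigma b).

Definition tl (e : T * T) : T := e.1.
Definition hd (e : T * T) : T := e.2.

Definition backward (e : T * T) : bool := arc e.1 e.2 && (sigma e.2 < sigma e.1).

Definition consecutive (u v : T) : bool :=
  (u != v) && [forall w, ~~ (between u w v || between v w u)].

Definition fully_sparse : Prop :=
  (forall e f, backward e -> backward f -> e != f ->
     [&& tl e != tl f, tl e != hd f, hd e != tl f & hd e != hd f]) /\
  (forall e, backward e -> ~~ consecutive (tl e) (hd e)) /\
  (forall v, exists e, backward e /\ (v = tl e \/ v = hd e)).

Definition triple_triangle (a b c : T) : bool := [&& arc a b, arc b c & arc c a].

Definition is_triangle (A : {set T * T}) : bool :=
  [exists a, exists b, exists c,
     triple_triangle a b c && (A == [set (a, b); (b, c); (c, a)])].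

Definition packing (P : {set {set T * T}}) : bool :=
  [forall A in P, is_triangle A] &&
  [forall A in P, forall B in P, (A != B) ==> [disjoint A & B]].

Definition packing_number : nat :=
  \max_(P : {set {set T * T}} | packing P) #|P|.

Definition max_packing (P : {set {set T * T}}) : bool :=
  packing P && (#|P| == packing_number).

Definition Garc (ei ej : T * T) : bool :=
  [&& backward ei, backward ej, ei != ej &
      triple_triangle (hd ei) (hd ej) (tl ei) || triple_triangle (hd ei) (tl ej) (tl ei)].

Definition goodX (X : {set (T * T) * (T * T)}) : bool :=
  [&& [forall x in X, Garc x.1 x.2],
      [forall e : T * T, #|[set f | (e, f) \in X]| <= 1] &
      [forall x in X, (x.2, x.1) \notin X]].

Definition maxX : nat := \max_(X : {set (T * T) * (T * T)} | goodX X) #|X|.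

Definition is_Pi (x : (T * T) * (T * T)) (A : {set T * T}) : Prop :=
  exists y, (y = tl x.2 \/ y = hd x.2) /\ between (hd x.1) y (tl x.1) /\
    A = [set (hd x.1, y); (y, tl x.1); (tl x.1, hd x.1)].

End Defs.

From Pilot Require Import Defs.
From mathcomp Require Import all_boot zify.
Set Implicit Arguments. Unset Strict Implicit. Unset Printing Implicit Defensive.

(* Relative to sigma, a triangle of the tournament consists of a backward arc
   e and an apex y strictly between the endpoints of e; as the backward arcs
   form a matching, e is the only backward arc of the triangle, and as they
   cover all vertices, y is an endpoint of another backward arc f, so the
   triangle is Pi(e f).  Triangles on the same backward arc meet in that arc,
   and triangles Pi(e f), Pi(e' f') on distinct backward arcs share an arc only
   if each apex is an endpoint of the other base, i.e. f = e' and f' = e.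
   Hence packings of triangles correspond to the digon-free arc sets of G' of
   out-degree at most 1, with the same size. *)

Section FullySparse.
Variables (T : finType) (arc : rel T) (sigma : T -> nat).

Local Notation backward := (backward arc sigma).
Local Notation between := (between sigma).
Local Notation triple_triangle := (triple_triangle arc).
Local Notation Garc := (Garc arc sigma).
Local Notation goodX := (goodX arc sigma).
Local Notation packing := (packing arc).

Hypotheses (arc_tournament : tournament arc) (sigma_inj : injective sigma).
Hypothesis backward_matching : forall e f, backward e -> backward f -> e != f ->
  [&& tl e != tl f, tl e != hd f, hd e != tl f & hd e != hd f].
Hypothesis backward_cover : forall v, exists e, backward e /\ (v = tl e \/ v = hd e).

Lemma arcxx u : ~~ arc u u.
Proof. by case: arc_tournament. Qed.

Lemma arc_neq u v : arc u v -> u != v.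
Proof. by apply: contraTneq => ->; rewrite arcxx. Qed.

Lemma arc_total u v : u != v -> arc u v || arc v u.
Proof. by case: arc_tournament => _ /[apply] /andP[]. Qed.

Lemma sigma_lt_neq u v : sigma u < sigma v -> u != v.
Proof. by apply: contraTneq => ->; rewrite ltnn. Qed.

Lemma backward_lt e : backward e -> sigma (hd e) < sigma (tl e).
Proof. by case/andP. Qed.

Lemma backward_share_eq e f y : backward e -> backward f ->
  y \in [:: tl e; hd e] -> y \in [:: tl f; hd f] -> e = f.
Proof.
move=> be bf ye yf; apply: contraTeq isT => /(backward_matching be bf).
by move: ye yf; rewrite !inE => /orP[]/eqP-> /orP[]/eqP->; rewrite eqxx /= ?andbF.
Qed.

(* Otherwise (u, v) would be a second backward arc at w. *)
Lemma arc_at_backward_lt e u v w : backward e -> arc u v -> (u, v) != e ->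
  w \in [:: u; v] -> w \in [:: tl e; hd e] -> sigma u < sigma v.
Proof.
move=> be uv uv_ne_e wuv we; rewrite ltn_neqAle; apply/andP; split.
  by apply: contraTneq (arc_neq uv) => /sigma_inj ->; rewrite eqxx.
rewrite leqNgt; apply: contra uv_ne_e => vu; apply/eqP.
by apply: (@backward_share_eq (u, v) e w _ be wuv we); rewrite /backward uv.
Qed.

Lemma triangle_between e y : backward e ->
  triple_triangle (hd e) y (tl e) = between (hd e) y (tl e).
Proof.
case: e => t h be; have lt_ht := backward_lt be; rewrite /tl /hd /= in lt_ht *.
have h_neq_t : (h == t) = false by apply/negbTE/sigma_lt_neq.
have t_neq_h : (t == h) = false by rewrite eq_sym.
apply/idP/idP => [/and3P[hy yt _] | /andP[lt_hy lt_yt]].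
  apply/andP; split.
    apply: (arc_at_backward_lt (w := h) be hy);
      by rewrite ?xpair_eqE ?h_neq_t ?inE ?eqxx ?orbT.
  apply: (arc_at_backward_lt (w := t) be yt);
    by rewrite ?xpair_eqE ?t_neq_h ?andbF ?inE ?eqxx ?orbT.
have y_neq_h : (y == h) = false by rewrite eq_sym; apply/negbTE/sigma_lt_neq.
have y_neq_t : (y == t) = false by apply/negbTE/sigma_lt_neq.
apply/and3P; split; last by case/andP: be.
- case/orP: (arc_total (sigma_lt_neq lt_hy)) => // yh.
  suff : sigma y < sigma h by rewrite ltnNge ltnW.
  apply: (arc_at_backward_lt (w := h) be yh);
    by rewrite ?xpair_eqE ?y_neq_t ?inE ?eqxx ?orbT.
- case/orP: (arc_total (sigma_lt_neq lt_yt)) => // ty.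
  suff : sigma t < sigma y by rewrite ltnNge ltnW.
  apply: (arc_at_backward_lt (w := t) be ty);
    by rewrite ?xpair_eqE ?y_neq_h ?andbF ?inE ?eqxx ?orbT.
Qed.

Lemma triangle_backward a b c : triple_triangle a b c ->
  [|| backward (a, b), backward (b, c) | backward (c, a)].
Proof.
case/and3P=> ab bc ca; rewrite /backward /= ab bc ca /=.
case: ltnP => // le_ab; case: ltnP => // le_bc; rewrite ltnNge.
apply: contraL (arc_neq ab) => le_ac; rewrite negbK; apply/eqP/sigma_inj; lia.
Qed.

Definition triangle_of (e : T * T) (y : T) : {set T * T} :=
  [set (hd e, y); (y, tl e); (tl e, hd e)].

Lemma triangle_ofP e y z :
  reflect [\/ z = (hd e, y), z = (y, tl e) | z = (tl e, hd e)] (z \in triangle_of e y).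
Proof. by rewrite !inE -orbA; apply: (iffP or3P) => -[] /eqP; constructor. Qed.

Lemma mem_triangle_of e y : e \in triangle_of e y.
Proof. by apply/triangle_ofP; constructor 3; case: e. Qed.

Lemma is_triangle_of e y : backward e -> between (hd e) y (tl e) ->
  is_triangle arc (triangle_of e y).
Proof.
move=> be bt; apply/existsP; exists (hd e); apply/existsP; exists y.
by apply/existsP; exists (tl e); rewrite triangle_between // bt; apply/eqP.
Qed.

Lemma triangle_ofE A : is_triangle arc A ->
  exists e y, [/\ backward e, between (hd e) y (tl e) & A = triangle_of e y].
Proof.
case/existsP=> a /existsP[b /existsP[c /andP[abc /eqP->]]].
have rot x y z : [set (x, y); (y, z); (z, x)] = [set (y, z); (z, x); (x, y)].
  by apply/setP => w; rewrite !inE -orbA orbC.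
have rot_tri x y z : triple_triangle x y z = triple_triangle y z x.
  by rewrite /Defs.triple_triangle andbC andbA.
have base x y z : triple_triangle x y z -> backward (z, x) ->
    exists e v, [/\ backward e, between (hd e) v (tl e) &
                    [set (x, y); (y, z); (z, x)] = triangle_of e v].
  (* [triangle_of (z, x) y] is [[set (x, y); (y, z); (z, x)]] by conversion. *)
  by move=> xyz zx; exists (z, x), y; rewrite -triangle_between.
case/or3P: (triangle_backward abc) => [ab | bc | ca]; last exact: base abc ca.
- by rewrite rot; apply: base ab; rewrite -rot_tri.
- by rewrite rot rot; apply: base bc; rewrite -(rot_tri b) -rot_tri.
Qed.

Lemma triangle_of_backward_eq e f y : between (hd e) y (tl e) -> backward f ->
  f \in triangle_of e y -> f = e.
Proof.
move=> /andP[lt_ey lt_ye] /backward_lt + /triangle_ofP[] E;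
  rewrite E /hd /tl /= in lt_ey lt_ye *.
- by move=> ?; exfalso; lia.
- by move=> ?; exfalso; lia.
- by case: e {E lt_ey lt_ye}.
Qed.

Lemma triangle_of_apex_inj e y y' : between (hd e) y (tl e) ->
  triangle_of e y = triangle_of e y' -> y = y'.
Proof.
move=> /andP[lt_ey lt_ye] E.
have : (hd e, y) \in triangle_of e y' by rewrite -E !inE eqxx.
case/triangle_ofP => [[] | [E1 E2] | [E1 E2]] //.
all: by move: lt_ey lt_ye; rewrite ?E1 ?E2; lia.
Qed.

Lemma triangle_of_meet e e' y y' z : backward e -> backward e' -> e != e' ->
  z \in triangle_of e y -> z \in triangle_of e' y' ->
  (y = tl e' /\ y' = hd e) \/ (y = hd e' /\ y' = tl e).
Proof.
move=> be be' ne /triangle_ofP[]-> /triangle_ofP[] [E1 E2]; try by [left | right].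
all: case/eqP: ne; first
  [ by apply: (backward_share_eq (y := hd e)); rewrite // !inE ?E1 ?E2 eqxx ?orbT
  | by apply: (backward_share_eq (y := tl e)); rewrite // !inE ?E1 ?E2 eqxx ?orbT ].
Qed.

Lemma Garc_backward e f : Garc e f -> backward e /\ backward f.
Proof. by case/and4P=> be bf _ _. Qed.

Lemma Garc_neq e f : Garc e f -> e != f.
Proof. by case/and4P. Qed.

Lemma endpoint_not_between e y :
  y \in [:: tl e; hd e] -> ~~ between (hd e) y (tl e).
Proof. by rewrite !inE /Defs.between => /orP[]/eqP->; rewrite ltnn ?andbF. Qed.

Lemma Garc_inner e f y : backward e -> backward f ->
  y \in [:: tl f; hd f] -> between (hd e) y (tl e) -> Garc e f.
Proof.
move=> be bf y_f bt; have ne : e != f.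
  by apply: contraTneq bt => ->; apply: endpoint_not_between.
rewrite /Defs.Garc be bf ne /=.
by move: y_f bt; rewrite !inE -!triangle_between // => /orP[]/eqP-> ->; rewrite ?orbT.
Qed.

Lemma goodX_Garc X x : goodX X -> x \in X -> Garc x.1 x.2.
Proof. by case/and3P=> /forallP/(_ x)/implyP. Qed.

Lemma goodX_no_digon X x : goodX X -> x \in X -> (x.2, x.1) \notin X.
Proof. by case/and3P=> _ _ /forallP/(_ x)/implyP. Qed.

Lemma goodX_fst_inj X : goodX X -> {in X &, injective fst}.
Proof.
case/and3P=> _ /forallP out _ x x' xX x'X E.
have /card_le1_eqP/(_ x'.2 x.2) x2_eq := out x.1.
apply: injective_projections => //; apply: x2_eq.
  by rewrite inE E -surjective_pairing.
by rewrite inE -surjective_pairing.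
Qed.

Lemma is_PiP x A : is_Pi sigma x A ->
  exists2 y, (y \in [:: tl x.2; hd x.2]) && between (hd x.1) y (tl x.1) &
    A = triangle_of x.1 y.
Proof.
case=> y [y_x2 [bt ->]]; exists y => //; rewrite bt andbT !inE.
by case: y_x2 => ->; rewrite eqxx ?orbT.
Qed.

Section PiOfGoodX.
Variables (X : {set (T * T) * (T * T)}) (Pi : (T * T) * (T * T) -> {set T * T}).
Hypotheses (X_good : goodX X) (Pi_is_Pi : forall x, x \in X -> is_Pi sigma x (Pi x)).

Lemma goodX_Pi_triangle x : x \in X ->
  exists2 y, between (hd x.1) y (tl x.1) & Pi x = triangle_of x.1 y.
Proof. by move=> /Pi_is_Pi/is_PiP[y /andP[_ bt] ->]; exists y. Qed.

Lemma goodX_mem_Pi x : x \in X -> x.1 \in Pi x.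
Proof. by case/goodX_Pi_triangle=> y _ ->; apply: mem_triangle_of. Qed.

(* Two Pi's can only meet along a digon of X. *)
Lemma goodX_Pi_disjoint x x' :
  x \in X -> x' \in X -> x != x' -> [disjoint Pi x & Pi x'].
Proof.
move=> xX x'X ne.
have [bx1 bx2] := Garc_backward (goodX_Garc X_good xX).
have [bx1' bx2'] := Garc_backward (goodX_Garc X_good x'X).
have [y /andP[y_x2 _] ->] := is_PiP (Pi_is_Pi xX).
have [y' /andP[y'_x2' _] ->] := is_PiP (Pi_is_Pi x'X).
have ne1 : x.1 != x'.1 by apply: contra ne => /eqP/(goodX_fst_inj X_good xX x'X)->.
apply/pred0P => z /=; apply/negbTE/andP => -[zx zx'].
have [x2_eq x'2_eq] : x.2 = x'.1 /\ x'.2 = x.1.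
  case: (triangle_of_meet bx1 bx1' ne1 zx zx') => -[Ey Ey']; split; first
    [ by apply: (backward_share_eq (y := y)); rewrite // Ey !inE eqxx ?orbT
    | by apply: (backward_share_eq (y := y')); rewrite // Ey' !inE eqxx ?orbT ].
by move: (goodX_no_digon X_good xX); rewrite x2_eq -x'2_eq -surjective_pairing x'X.
Qed.

Lemma goodX_Pi_packing : packing [set Pi x | x in X].
Proof.
apply/andP; split; apply/forallP => A; apply/implyP => /imsetP[x xX ->].
  have [y bt ->] := goodX_Pi_triangle xX.
  by apply: is_triangle_of => //; case: (Garc_backward (goodX_Garc X_good xX)).
apply/forallP => B; apply/implyP => /imsetP[x' x'X ->]; apply/implyP => ne.
by apply: goodX_Pi_disjoint => //; apply: contraNneq ne => ->.
Qed.

Lemma card_goodX_Pi : #|[set Pi x | x in X]| = #|X|.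
Proof.
apply: card_in_imset => x x' xX x'X E; apply/eqP; apply: contraT => ne.
have := goodX_Pi_disjoint xX x'X ne; rewrite -E => /pred0P/(_ x.1).
by rewrite /= goodX_mem_Pi.
Qed.

End PiOfGoodX.

Definition Pi_of (x : (T * T) * (T * T)) : {set T * T} :=
  if [pick y in [:: tl x.2; hd x.2] | between (hd x.1) y (tl x.1)] is Some y
  then triangle_of x.1 y else set0.

Lemma Pi_of_is_Pi x : Garc x.1 x.2 -> is_Pi sigma x (Pi_of x).
Proof.
case/and4P=> be _ _; rewrite !triangle_between // => inner.
rewrite /Pi_of; case: pickP => [y /andP[y_x2 bt] | none].
  exists y; do !split => //.
  by move: y_x2; rewrite !inE => /orP[]/eqP->; [left | right].
by case/orP: inner => bt; [move: (none (hd x.2)) | move: (none (tl x.2))];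
  rewrite /= bt !inE eqxx ?orbT.
Qed.

Lemma maxX_le_packing_number : maxX arc sigma <= packing_number arc.
Proof.
apply/bigmax_leqP => X X_good.
have Pi_ok x : x \in X -> is_Pi sigma x (Pi_of x).
  by move=> xX; apply: Pi_of_is_Pi; apply: goodX_Garc xX.
rewrite -(card_goodX_Pi X_good Pi_ok).
exact: leq_bigmax_cond (goodX_Pi_packing X_good Pi_ok).
Qed.

Lemma packing_triangle P A : packing P -> A \in P -> is_triangle arc A.
Proof. by case/andP=> /forallP/(_ A)/implyP. Qed.

Lemma packing_meet_eq P A B z : packing P -> A \in P -> B \in P ->
  z \in A -> z \in B -> A = B.
Proof.
case/andP=> _ /forallP/(_ A)/implyP disj AP BP zA zB.
apply/eqP; apply: contraT => ne.
move: (disj AP) => /forallP/(_ B)/implyP/(_ BP)/implyP/(_ ne)/pred0P/(_ z).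
by rewrite /= zA zB.
Qed.

(* The triples (x, y) such that y is the apex of a choice of Pi(x) lying in P;
   their first components form the arc set X of the paper associated with P. *)
Definition Pi_witnesses (P : {set {set T * T}}) : {set (T * T) * (T * T) * T} :=
  [set q | [&& Garc q.1.1 q.1.2, q.2 \in [:: tl q.1.2; hd q.1.2],
               between (hd q.1.1) q.2 (tl q.1.1) & triangle_of q.1.1 q.2 \in P]].

Definition Pi_preimage (P : {set {set T * T}}) : {set (T * T) * (T * T)} :=
  [set q.1 | q in Pi_witnesses P].

Section PiPreimage.
Variable P : {set {set T * T}}.
Hypothesis P_packing : packing P.

Lemma Pi_witnesses_apex_eq q q' : q \in Pi_witnesses P -> q' \in Pi_witnesses P ->
  q.1.1 = q'.1.1 -> q.2 = q'.2.
Proof.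
rewrite !inE => /and4P[_ _ bt qP] /and4P[_ _ _ q'P] E.
have := packing_meet_eq P_packing qP q'P (mem_triangle_of _ _).
rewrite -E => /(_ (mem_triangle_of _ _)); exact: triangle_of_apex_inj.
Qed.

Lemma card_Pi_preimage : #|Pi_preimage P| = #|Pi_witnesses P|.
Proof.
apply: card_in_imset => q q' qW q'W E; apply: injective_projections => //.
by apply: Pi_witnesses_apex_eq; rewrite ?E.
Qed.

(* A triangle of P on the backward arc e with apex y is Pi(e f) for the
   backward arc f covering y. *)
Lemma card_le_Pi_witnesses : #|P| <= #|Pi_witnesses P|.
Proof.
apply: leq_trans (leq_imset_card (fun q => triangle_of q.1.1 q.2) _).
apply: subset_leq_card; apply/subsetP => A AP.
have [e [y [be bt EA]]] := triangle_ofE (packing_triangle P_packing AP).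
have [f [bf y_f]] := backward_cover y.
have {}y_f : y \in [:: tl f; hd f].
  by rewrite !inE; case: y_f => ->; rewrite eqxx ?orbT.
apply/imsetP; exists ((e, f), y) => //.
by rewrite inE /= (Garc_inner be bf y_f bt) y_f bt -EA AP.
Qed.

Lemma Pi_witnesses_no_digon e f y y' :
  ((e, f), y) \in Pi_witnesses P -> ((f, e), y') \in Pi_witnesses P -> False.
Proof.
rewrite !inE /= => /and4P[G y_f bt efP] /and4P[_ y'_e bt' feP].
have [be _] := Garc_backward G.
have shared_arc_absurd z : z \in triangle_of e y -> z \in triangle_of f y' -> False.
  move=> ze zf; have E := packing_meet_eq P_packing efP feP ze zf.
  have := triangle_of_backward_eq bt' be; rewrite -E mem_triangle_of => /(_ isT) ef.
  by move: (Garc_neq G); rewrite ef eqxx.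
case/orP: y_f => /eqP Ey; case/orP: y'_e => /eqP Ey'; subst y y'.
- by move: bt bt'; rewrite /Defs.between; lia.
- by apply: (shared_arc_absurd (hd e, tl f)); rewrite !inE eqxx ?orbT.
- by apply: (shared_arc_absurd (hd f, tl e)); rewrite !inE eqxx ?orbT.
- by move: bt bt'; rewrite /Defs.between; lia.
Qed.

Lemma goodX_Pi_preimage : goodX (Pi_preimage P).
Proof.
apply/and3P; split.
- apply/forallP => x; apply/implyP => /imsetP[q]; rewrite inE.
  by case/and4P=> G _ _ _ ->.
- apply/forallP => e; apply/card_le1_eqP => f f'; rewrite !inE.
  move=> /imsetP[[[e1 f1] y] qW [-> ->]] /imsetP[[[e2 f2] y'] q'W [E ->]].
  have y_eq : y' = y by apply: (Pi_witnesses_apex_eq q'W qW).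
  move: qW q'W; rewrite !in_set /= y_eq => /and4P[/Garc_backward[_ bf1] y_f1 _ _].
  case/and4P=> /Garc_backward[_ bf2] y_f2 _ _.
  exact: backward_share_eq bf2 bf1 y_f2 y_f1.
- apply/forallP => x; apply/implyP => /imsetP[[[e f] y] qW ->]; apply/negP.
  case/imsetP=> [[[f' e'] y']] q'W [Ef Ee]; subst f' e'.
  exact: Pi_witnesses_no_digon qW q'W.
Qed.

End PiPreimage.

Lemma packing_number_le_maxX : packing_number arc <= maxX arc sigma.
Proof.
apply/bigmax_leqP => P P_packing.
rewrite (leq_trans (card_le_Pi_witnesses P_packing)) // -card_Pi_preimage //.
exact: leq_bigmax_cond (goodX_Pi_preimage P_packing).
Qed.

End FullySparse.

Theorem mainTheorem10 (T : finType) (arc : rel T) (sigma : T -> nat) :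
  tournament arc -> injective sigma -> fully_sparse arc sigma ->
  packing_number arc = maxX arc sigma /\
  (forall (X : {set (T * T) * (T * T)}), goodX arc sigma X ->
   forall Pi : (T * T) * (T * T) -> {set T * T},
     (forall x, x \in X -> is_Pi sigma x (Pi x)) ->
     packing arc [set Pi x | x in X] /\
     (forall x y, x \in X -> y \in X -> x != y -> [disjoint Pi x & Pi y]) /\
     (#|X| = maxX arc sigma <-> max_packing arc [set Pi x | x in X])).
Proof.
move=> tour sigma_inj [matching [_ cover]].
have pn_eq : packing_number arc = maxX arc sigma.
  apply/eqP; rewrite eqn_leq (packing_number_le_maxX tour sigma_inj matching cover).
  exact: maxX_le_packing_number tour sigma_inj matching.
split=> // X X_good Pi Pi_ok.
have Pi_packing := goodX_Pi_packing tour sigma_inj matching X_good Pi_ok.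
split=> //; split.
  by move=> x x'; apply: (goodX_Pi_disjoint matching X_good Pi_ok).
rewrite /max_packing Pi_packing (card_goodX_Pi matching X_good Pi_ok) pn_eq.
exact: rwP eqP.
Qed.
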